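(* Let $\mathcal C=\mathcal C(I,A,(\rho_i)_{i\in I},(C^a)_{a\in A})$ be a connected Cartan scheme and $\mathcal R=\mathcal R(\mathcal C,(R^a)_{a\in A})$ a root system of type $\mathcal C$. Let $I'\subset I$, $I''=I\setminus I'$, and assume $I'\neq\emptyset\neq I''$. For $a\in A$ put $\hat R^a=(R^a\cap\sum_{i\in I'}\mathbb Z\alpha_i)\cup(R^a\cap\sum_{i\in I''}\mathbb Z\alpha_i)$. The following are equivalent: (1) there exists $a\in A$ with $c^a_{ij}=0$ for all $i\in I'$, $j\in I''$; (2) $c^a_{ij}=c^a_{ji}=0$ for all $a\in A$, $i\in I'$, $j\in I''$; (3) $\mathcal R(\mathcal C,(\hat R^a)_{a\in A})$ is a root system of type $\mathcal C$. If $\mathcal R$ is finite, then (1)–(3) are also equivalent to each of: (4) $\hat R^a=R^a$ for all $a\in A$; (5) $\mathcal R$ is the direct sum of its restrictions to $I'$ and $I''$, i.e. $R^a=(R^a\cap\sum_{i\in I'}\mathbb Z\alpha_i)\cup(R^a\cap\sum_{j\in I''}\mathbb Z\alpha_j)$ for all $a\in A$.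
   Context: Let $I$ be a nonempty finite set and $\{\alpha_i\mid i\in I\}$ the standard basis of $\mathbb Z^I$; $\mathbb N_0=\{0,1,2,\dots\}$. A generalized Cartan matrix is $C=(c_{ij})_{i,j\in I}\in\mathbb Z^{I\times I}$ with $c_{ii}=2$, $c_{jk}\le0$ for $j\ne k$, and $c_{ij}=0\Rightarrow c_{ji}=0$. A Cartan scheme $\mathcal C=\mathcal C(I,A,(\rho_i)_{i\in I},(C^a)_{a\in A})$ consists of a nonempty set $A$, maps $\rho_i:A\to A$ and generalized Cartan matrices $C^a=(c^a_{jk})_{j,k\in I}$ such that (C1) $\rho_i^2=\mathrm{id}$ and (C2) $c^a_{ij}=c^{\rho_i(a)}_{ij}$ for all $a\in A$, $i,j\in I$. It is connected if the group generated by the $\rho_i$ acts transitively on $A$. For $i\in I$, $a\in A$ let $\sigma_i^a\in\mathrm{Aut}(\mathbb Z^I)$, $\sigma_i^a(\alpha_j)=\alpha_j-c^a_{ij}\alpha_i$. A root system of type $\mathcal C$ is a family $\mathcal R=\mathcal R(\mathcal C,(R^a)_{a\in A})$ of subsets $R^a\subset\mathbb Z^I$ such that, writing $R^a_+=R^a\cap\mathbb N_0^I$ and $m^a_{i,j}=|R^a\cap(\mathbb N_0\alpha_i+\mathbb N_0\alpha_j)|$, for all $a\in A$, $i,j\in I$: (R1) $R^a=R^a_+\cup(-R^a_+)$; (R2) $R^a\cap\mathbb Z\alpha_i=\{\alpha_i,-\alpha_i\}$; (R3) $\sigma_i^a(R^a)=R^{\rho_i(a)}$; (R4) if $i\neq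 j$ and $m^a_{i,j}$ is finite then $(\rho_i\rho_j)^{m^a_{i,j}}(a)=a$. It is finite if every $R^a$ is finite. *)

From HB Require Import structures.
From mathcomp Require Import all_boot all_order all_algebra.
Set Implicit Arguments. Unset Strict Implicit. Unset Printing Implicit Defensive.
Import Order.TTheory GRing.Theory Num.Theory.
Local Open Scope ring_scope.

Notation zvec I := {ffun I -> int}.

Definition alpha (I : finType) (i : I) : zvec I := [ffun j => ((i == j) : nat)%:Z].

Definition is_gcm (I : finType) (c : I -> I -> int) : Prop :=
  (forall i, c i i = 2) /\
  (forall j k, j != k -> c j k <= 0) /\
  (forall i j, c i j = 0 -> c j i = 0).

Definition is_cartan_scheme (I : finType) (A : Type)
    (rho : I -> A -> A) (C : A -> I -> I -> int) : Prop :=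
  inhabited A /\
  (forall a, is_gcm (C a)) /\
  (forall i a, rho i (rho i a) = a) /\
  (forall a i j, C a i j = C (rho i a) i j).

(* connected: the group generated by the rho_i acts transitively on A
   (since the rho_i are involutions, group elements are words in the rho_i) *)
Definition cs_connected (I : finType) (A : Type) (rho : I -> A -> A) : Prop :=
  forall a b : A, exists s : seq I, foldr (fun i x => rho i x) a s = b.

(* sigma_i^a (alpha_j) = alpha_j - c^a_ij alpha_i, extended linearly *)
Definition sigma (I : finType) (A : Type) (C : A -> I -> I -> int)
    (i : I) (a : A) (v : zvec I) : zvec I :=
  [ffun j => v j - (if j == i then \sum_k C a i k * v k else 0)].

Definition nonneg_vec (I : finType) (v : zvec I) : Prop := forall i, 0 <= v i.

Definition in_cone2 (I : finType) (i j : I) (v : zvec I) : Prop :=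
  exists p q : nat, v = alpha i *+ p + alpha j *+ q.

Definition has_card (I : finType) (P : zvec I -> Prop) (n : nat) : Prop :=
  exists s : seq (zvec I), uniq s /\ size s = n /\ (forall v, P v <-> v \in s).

Definition is_root_system (I : finType) (A : Type)
    (rho : I -> A -> A) (C : A -> I -> I -> int)
    (R : A -> zvec I -> Prop) : Prop :=
  (forall a v, R a v <-> ((R a v /\ nonneg_vec v) \/ (R a (- v) /\ nonneg_vec (- v)))) /\
  (forall a i v, (R a v /\ exists k : int, v = alpha i *~ k) <->
                 (v = alpha i \/ v = - alpha i)) /\
  (forall a i w, R (rho i a) w <-> exists v, R a v /\ sigma C i a v = w) /\
  (forall a i j, i != j -> forall n : nat,
       has_card (fun v => R a v /\ in_cone2 i j v) n ->
       iter n (fun b => rho i (rho j b)) a = a).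

Definition root_system_finite (I : finType) (A : Type) (R : A -> zvec I -> Prop) : Prop :=
  forall a, exists s : seq (zvec I), forall v, R a v <-> v \in s.

(* v in sum_{i in J} Z alpha_i *)
Definition supported_in (I : finType) (J : {set I}) (v : zvec I) : Prop :=
  forall i, i \notin J -> v i = 0.

Definition Rhat (I : finType) (A : Type) (R : A -> zvec I -> Prop) (J : {set I})
    (a : A) (v : zvec I) : Prop :=
  (R a v /\ supported_in J v) \/ (R a v /\ supported_in (~: J) v).

From HB Require Import structures.
From mathcomp Require Import all_boot all_order all_algebra zify ring.
From Stdlib Require Import Classical FunctionalExtensionality PropExtensionality.
Import Order.TTheory GRing.Theory Num.Theory.
Set Implicit Arguments. Unset Strict Implicit. Unset Printing Implicit Defensive.
Local Open Scope ring_scope.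

(* If C^a is block diagonal for the partition (I', I'') and k is in I', then
   so is C^(rho_k a): otherwise some c^(rho_k a)_ji with i in I', j in I'' is
   nonzero, and w = sigma_k sigma_j alpha_i is a root of a whose coordinates in
   I'' vanish except at j, so sigma_j^a flips the sign of w_j but not of w_i,
   against the sign coherence of roots.  By connectedness (1) gives (2).
   Block diagonal Cartan matrices make every reflection preserve the two
   coordinate subspaces, which yields (R1)-(R3) for the restricted family, and
   (R4) holds because a rank two cone spanned by simple roots of different
   blocks contains no root.  Conversely sigma_i(alpha_j) must lie in one block,
   forcing c_ij = 0.
   For finite R take a word s in the reflections of I' such that s^-1(alpha_k)
   is negative for all k in I'; it exists because extending s by a k violating
   this strictly increases the number of positive roots made negative.  A
   positive root v with a nonzero coordinate in I'' is sent by s to a positive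
   root u; expanding u in simple roots and pulling back shows that the
   coordinates of v in I' are non-positive, hence zero. *)

Section Coordinates.
Variable I : finType.
Implicit Types (u v : zvec I) (i j : I).

Definition nonpos_vec v : Prop := forall i, v i <= 0.

Lemma alphaE i j : alpha i j = ((i == j) : nat)%:Z.
Proof. by rewrite ffunE. Qed.

Lemma sum_mul_alpha (f : I -> int) j : \sum_k f k * alpha j k = f j.
Proof.
rewrite (bigD1 j) //= big1 ?addr0 => [|k /negPf nkj]; first by rewrite alphaE eqxx mulr1.
by rewrite alphaE eq_sym nkj mulr0.
Qed.

Lemma zvecDE u v i : (u + v) i = u i + v i. Proof. by rewrite ffunE. Qed.
Lemma zvecNE v i : (- v) i = - v i. Proof. by rewrite ffunE. Qed.
Lemma zvecMnE v n i : (v *+ n) i = v i *+ n. Proof. exact: ffunMnE. Qed.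
Lemma zvecMzE v n i : (v *~ n) i = v i * n. Proof. by rewrite ffunMzE mulrzz. Qed.

End Coordinates.

Definition zvecE := (zvecDE, zvecNE, zvecMnE, zvecMzE, alphaE).

Lemma zvec_decomp (I : finType) (u : zvec I) : u = \sum_l alpha l *~ u l.
Proof.
apply/ffunP => t; rewrite sum_ffunE -[LHS](sum_mul_alpha u t).
by apply: eq_bigr => l _; rewrite !zvecE eq_sym mulrC.
Qed.

Section Reflections.
Variables (I : finType) (A : Type) (C : A -> I -> I -> int).

Definition cartan_pair (a : A) (i : I) (v : zvec I) : int := \sum_k C a i k * v k.

Lemma cartan_pairB a i : {morph cartan_pair a i : x y / x - y}.
Proof.
by move=> x y; rewrite /cartan_pair -sumrB; apply: eq_bigr => k _; rewrite !ffunE mulrBr.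
Qed.

HB.instance Definition _ a i :=
  GRing.isZmodMorphism.Build (zvec I) int (cartan_pair a i) (cartan_pairB a i).

Lemma cartan_pair_alpha a i j : cartan_pair a i (alpha j) = C a i j.
Proof. exact: sum_mul_alpha. Qed.

Lemma sigmaE a i v : sigma C i a v = v - alpha i *~ cartan_pair a i v.
Proof.
apply/ffunP => j; rewrite ffunE !zvecE eq_sym.
by case: (i == j); rewrite ?mul1r ?mul0r.
Qed.

Lemma sigmaB a i : {morph sigma C i a : x y / x - y}.
Proof. by move=> x y; apply/ffunP => t; rewrite !sigmaE raddfB !zvecE; ring. Qed.

HB.instance Definition _ a i :=
  GRing.isZmodMorphism.Build (zvec I) (zvec I) (sigma C i a) (sigmaB a i).

Lemma sigma_alpha a i j : sigma C i a (alpha j) = alpha j - alpha i *~ C a i j.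
Proof. by rewrite sigmaE cartan_pair_alpha. Qed.

Lemma sigma_neq a i v j : j != i -> sigma C i a v j = v j.
Proof. by move=> /negPf nji; rewrite ffunE nji subr0. Qed.

Lemma sigma_self a i v : sigma C i a v i = v i - cartan_pair a i v.
Proof. by rewrite ffunE eqxx. Qed.

Lemma sigmaK a b i v : C a i i = 2 -> (forall k, C b i k = C a i k) ->
  sigma C i b (sigma C i a v) = v.
Proof.
move=> Cii Cba; have pair_ba w : cartan_pair b i w = cartan_pair a i w.
  by apply: eq_bigr => k _; rewrite Cba.
rewrite sigmaE pair_ba {2}sigmaE raddfB raddfMz /= cartan_pair_alpha Cii.
by apply/ffunP => t; rewrite sigmaE !zvecE; ring.
Qed.

End Reflections.

Section RootSystem.
Variables (I : finType) (A : Type) (rho : I -> A -> A) (C : A -> I -> I -> int).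
Variable R : A -> zvec I -> Prop.
Hypothesis rsR : is_root_system rho C R.

Lemma root_sign a v : R a v -> nonneg_vec v \/ nonpos_vec v.
Proof.
case: rsR => R1 _ /R1 [[_ v_ge0]|[_ vN_ge0]]; [left|right] => // i.
by have := vN_ge0 i; rewrite ffunE oppr_ge0.
Qed.

Lemma rootN a v : R a v -> R a (- v).
Proof.
case: rsR => R1 _ Rv; have /R1 [[_ v_ge0]|[//]] := Rv.
by apply/R1; right; rewrite opprK.
Qed.

Lemma root_alpha a i : R a (alpha i).
Proof.
by case: rsR => _ [R2 _]; have [_ /(_ (or_introl erefl)) []] := R2 a i (alpha i).
Qed.

Lemma root_sigma a i v : R a v -> R (rho i a) (sigma C i a v).
Proof. by case: rsR => _ [_ [R3 _]] Rv; apply/R3; exists v. Qed.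

Lemma root_sigma_inv a i w : R (rho i a) w -> exists2 v, R a v & sigma C i a v = w.
Proof. by case: rsR => _ [_ [R3 _]] /R3 [v []]; exists v. Qed.

Lemma root_multiple_alpha a i v k :
  R a v -> v = alpha i *~ k -> v = alpha i \/ v = - alpha i.
Proof. by case: rsR => _ [R2 _] Rv vE; apply/(R2 a i v); split; last exists k. Qed.

Lemma roots_sign_conflict a b v w i j : R a v -> R b w ->
  v i = w i -> w j = - v j -> v i != 0 -> v j != 0 -> False.
Proof.
move=> /root_sign [] v_sgn /root_sign [] w_sgn;
  have := v_sgn i; have := v_sgn j; have := w_sgn i; have := w_sgn j; lia.
Qed.

End RootSystem.

Section SupportedIn.
Variable I : finType.
Implicit Types (J : {set I}) (v w : zvec I).

Lemma supported_inN J v : supported_in J (- v) <-> supported_in J v.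
Proof. by split=> suppv m mJ; have := suppv m mJ; rewrite ?zvecNE; lia. Qed.

Lemma supported_inD J v w :
  supported_in J v -> supported_in J w -> supported_in J (v + w).
Proof. by move=> suppv suppw m mJ; rewrite ffunE suppv // suppw // addr0. Qed.

Lemma supported_inMn J v n : supported_in J v -> supported_in J (v *+ n).
Proof. by move=> suppv m mJ; rewrite ffunMnE suppv // mul0rn. Qed.

Lemma supported_in_alpha J (i : I) : i \in J -> supported_in J (alpha i).
Proof. by move=> iJ m mJ; rewrite alphaE; case: eqP mJ => // <-; rewrite iJ. Qed.

End SupportedIn.

Definition unmixed (I : finType) (J : {set I}) (v : zvec I) : Prop :=
  supported_in J v \/ supported_in (~: J) v.

Section Unmixed.
Variable I : finType.
Implicit Types (J : {set I}) (v : zvec I).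

Lemma unmixedN J v : unmixed J (- v) <-> unmixed J v.
Proof. by rewrite /unmixed !supported_inN. Qed.

Lemma unmixed_alphaMn J (i : I) n : unmixed J (alpha i *+ n).
Proof.
by case: (boolP (i \in J)) => iJ; [left|right];
   apply/supported_inMn/supported_in_alpha; rewrite ?inE.
Qed.

Lemma unmixed_alpha J (i : I) : unmixed J (alpha i).
Proof. by rewrite -[alpha i]mulr1n; apply: unmixed_alphaMn. Qed.

End Unmixed.

Section Splitting.
Variables (I : finType) (A : Type) (C : A -> I -> I -> int).

Definition cartan_split (J : {set I}) (a : A) : Prop :=
  forall i l, i \in J -> l \notin J -> C a i l = 0 /\ C a l i = 0.

Lemma cartan_splitC J a : cartan_split J a -> cartan_split (~: J) a.
Proof.
by move=> split_a i l; rewrite !inE negbK => iJ lJ; have [] := split_a l i lJ iJ.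
Qed.

Lemma sigma_supported J a i v : cartan_split J a ->
  supported_in J v -> supported_in J (sigma C i a v).
Proof.
move=> split_a suppv m mJ; rewrite ffunE suppv //.
case: eqP => [<-|_]; last by rewrite subr0.
rewrite big1 ?subr0 // => l _.
by case: (boolP (l \in J)) => lJ; [have [_ ->] := split_a l m lJ mJ; rewrite mul0r
                               | rewrite suppv // mulr0].
Qed.

Lemma sigma_unmixed J a i v :
  cartan_split J a -> unmixed J v -> unmixed J (sigma C i a v).
Proof.
by move=> split_a [suppv|suppv]; [left|right]; apply: sigma_supported suppv;
   last exact: cartan_splitC.
Qed.

End Splitting.

Section CartanScheme.
Variables (I : finType) (A : Type) (rho : I -> A -> A) (C : A -> I -> I -> int).
Hypothesis csC : is_cartan_scheme rho C.

Lemma cartan_diag a i : C a i i = 2.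
Proof. by case: csC => _ [/(_ a) [] + _ _]. Qed.

Lemma cartan_zero_sym a i j : C a i j = 0 -> C a j i = 0.
Proof. by case: csC => _ [/(_ a) [_ [_ ]] + _]; apply. Qed.

Lemma rhoK i a : rho i (rho i a) = a.
Proof. by case: csC => _ [_ []]. Qed.

Lemma cartan_rho_row a i j : C (rho i a) i j = C a i j.
Proof. by case: csC => _ [_ [_ C2]]; rewrite -C2. Qed.

Lemma sigma_rhoK a i v : sigma C i (rho i a) (sigma C i a v) = v.
Proof. by apply: sigmaK; [exact: cartan_diag | move=> k; exact: cartan_rho_row]. Qed.

Lemma sigma_split_flip J a j (w : zvec I) : cartan_split C J a -> j \notin J ->
  (forall l, l \notin J -> l != j -> w l = 0) -> sigma C j a w j = - w j.
Proof.
move=> split_a jJ w_out; rewrite sigma_self /cartan_pair (bigD1 j) //=.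
rewrite big1 ?addr0 ?cartan_diag => [|l lj]; first lia.
by case: (boolP (l \in J)) => lJ; [have [_ ->] := split_a l j lJ jJ; rewrite mul0r
                               | rewrite w_out // mulr0].
Qed.

End CartanScheme.

Section Connectedness.
Variables (I : finType) (A : Type) (rho : I -> A -> A) (C : A -> I -> I -> int).
Variable R : A -> zvec I -> Prop.
Hypotheses (csC : is_cartan_scheme rho C) (rsR : is_root_system rho C R).

Lemma cartan_split_rho_in J a k :
  cartan_split C J a -> k \in J -> cartan_split C J (rho k a).
Proof.
move=> split_a kJ i j iJ jJ; set b := rho k a.
suff Cbji : C b j i = 0 by split=> //; exact: (cartan_zero_sym csC Cbji).
apply/eqP/negP => /negP Cbji_neq0.
have ij : i != j by apply: contraNneq jJ => <-.
have jk : j != k by apply: contraNneq jJ => ->.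
have Cbkj : C b k j = 0 by rewrite (cartan_rho_row csC); have [] := split_a k j kJ jJ.
set w := sigma C k b (sigma C j (rho j b) (alpha i)).
have Rw : R a w.
  rewrite -[X in R X](rhoK csC k a); apply: (root_sigma rsR).
  by rewrite -[X in R X](rhoK csC j b); apply/(root_sigma rsR)/(root_alpha rsR).
have wE l : w l = alpha i l - alpha k l * C b k i - alpha j l * C b j i.
  rewrite /w [sigma C j _ _]sigma_alpha (cartan_rho_row csC) raddfB raddfMz /=.
  by rewrite !sigma_alpha Cbkj mulr0z subr0 !zvecE; ring.
have wj : w j = - C b j i.
  by rewrite wE !zvecE eqxx (negPf ij) eq_sym (negPf jk) /=; ring.
have wi : w i != 0.
  rewrite wE !zvecE eqxx (eq_sym j) (negPf ij) /=.
  by case: (k =P i) => [->|_] /=; rewrite ?(cartan_diag csC); lia.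
have flip : sigma C j a w j = - w j.
  apply: (sigma_split_flip csC split_a jJ) => l lJ lj.
  have li : i != l by apply: contraNneq lJ => <-.
  have lk : k != l by apply: contraNneq lJ => <-.
  by rewrite wE !zvecE (negPf li) (negPf lk) (eq_sym j) (negPf lj) /=; ring.
have same_i : w i = sigma C j a w i by rewrite sigma_neq.
apply: (roots_sign_conflict rsR Rw (root_sigma rsR j Rw) same_i flip wi).
by rewrite wj oppr_eq0.
Qed.

Lemma cartan_split_rho J a k : cartan_split C J a -> cartan_split C J (rho k a).
Proof.
move=> split_a; case: (boolP (k \in J)) => kJ; first exact: cartan_split_rho_in.
rewrite -[J]setCK; apply: cartan_splitC; apply: cartan_split_rho_in.
  exact: cartan_splitC.
by rewrite inE.
Qed.

Lemma cartan_split_everywhere J a : cs_connected rho ->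
  cartan_split C J a -> forall b, cartan_split C J b.
Proof.
move=> conn split_a b; have [s <-] := conn a b.
by elim: s => //= k s; apply: cartan_split_rho.
Qed.

End Connectedness.

Lemma RhatE (I : finType) (A : Type) (R : A -> zvec I -> Prop) J a v :
  Rhat R J a v <-> R a v /\ unmixed J v.
Proof.
by rewrite /unmixed; split=> [[[Rv s]|[Rv s]]|[Rv [s|s]]]; [split; auto..|left|right].
Qed.

Lemma has_card_ext (I : finType) (P Q : zvec I -> Prop) n :
  (forall v, P v <-> Q v) -> has_card P n -> has_card Q n.
Proof. by move=> PQ [s [? [? Ps]]]; exists s; do 2!split=> //; move=> v; rewrite -PQ. Qed.

Section Restriction.
Variables (I : finType) (A : Type) (rho : I -> A -> A) (C : A -> I -> I -> int).
Variable R : A -> zvec I -> Prop.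
Hypotheses (csC : is_cartan_scheme rho C) (rsR : is_root_system rho C R).

Lemma root_cone2_orthogonal a i j v p q : i != j -> C a i j = 0 -> R a v ->
  v = alpha i *+ p + alpha j *+ q -> p = 0%N \/ q = 0%N.
Proof.
move=> ij Cij Rv vE.
have [p0|p_neq0] := eqVneq p 0%N; first by left.
have [q0|q_neq0] := eqVneq q 0%N; first by right.
have vi : v i = p%:R by rewrite vE !zvecE eqxx (eq_sym j) (negPf ij) /=; lia.
have vj : v j = q%:R by rewrite vE !zvecE eqxx (negPf ij) /=; lia.
have flip : sigma C i a v i = - v i.
  rewrite sigma_self {2}vE raddfD !raddfMn /= !cartan_pair_alpha Cij (cartan_diag csC).
  by rewrite vi; lia.
have same_j : v j = sigma C i a v j by rewrite sigma_neq // eq_sym.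
exfalso; apply: (roots_sign_conflict rsR Rv (root_sigma rsR i Rv) same_j flip); lia.
Qed.

Lemma cartan_split_cone2 J a i j v : cartan_split C J a -> i != j ->
  R a v -> in_cone2 i j v -> unmixed J v.
Proof.
move=> split_a ij Rv [p [q vE]].
have [p0|p_neq0] := eqVneq p 0%N.
  by rewrite vE p0 mulr0n add0r; apply: unmixed_alphaMn.
have [q0|q_neq0] := eqVneq q 0%N.
  by rewrite vE q0 mulr0n addr0; apply: unmixed_alphaMn.
have same_side : (i \in J) = (j \in J).
  apply/idP/idP => [iJ|jJ]; apply/negPn/negP => notJ.
    have [Cij _] := split_a i j iJ notJ.
    by case: (root_cone2_orthogonal ij Cij Rv vE) => /eqP; apply/negP.
  have [Cji _] := split_a j i jJ notJ; have ji : j != i by rewrite eq_sym.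
  rewrite addrC in vE.
  by case: (root_cone2_orthogonal ji Cji Rv vE) => /eqP; apply/negP.
rewrite vE; case: (boolP (i \in J)) => iJ; [left|right];
  by apply: supported_inD; apply: supported_inMn; apply: supported_in_alpha;
     rewrite ?inE -?same_side.
Qed.

Lemma Rhat_root_system J : (forall a, cartan_split C J a) ->
  is_root_system rho C (Rhat R J).
Proof.
move=> split_J; have [R1 [R2 [R3 R4]]] := rsR.
split; [|split; [|split]].
- move=> a v; rewrite !RhatE unmixedN.
  split=> [[Rv s]|[[[Rv s] _]|[[RNv s] nn]]] //.
    by case: ((R1 a v).1 Rv) => [[_ nn]|[RNv nn]]; [left|right].
  by split=> //; apply/R1; right.
- move=> a i v; rewrite RhatE; split=> [[[Rv _] kv]|vE]; first exact: (R2 a i v).1.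
  have [Rv kv] := (R2 a i v).2 vE; do !split=> //.
  by case: vE => ->; rewrite ?unmixedN; apply: unmixed_alpha.
- move=> a i w; rewrite RhatE R3.
  split=> [[[v [Rv <-]] unmixed_w]|[v [/RhatE [Rv unmixed_v] <-]]].
    exists v; split=> //; apply/RhatE; split=> //.
    by rewrite -(sigma_rhoK csC a i v); apply: sigma_unmixed.
  by split; [exists v|exact: sigma_unmixed].
- move=> a i j ij n card; apply: (R4 a i j ij n); apply: has_card_ext card => v.
  split=> [[/RhatE []]|[Rv cone]] //; split=> //; apply/RhatE; split=> //.
  exact: (cartan_split_cone2 (split_J a) ij).
Qed.

Lemma Rhat_root_system_cartan_split J a :
  is_root_system rho C (Rhat R J) -> cartan_split C J a.
Proof.
move=> rsRhat i j iJ jJ.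
suff Cij : C a i j = 0 by split=> //; apply: (cartan_zero_sym csC).
have ij : i != j by apply: contraNneq jJ => <-.
have Ralpha : Rhat R J a (alpha j).
  by apply/RhatE; split; [exact: (root_alpha rsR)|exact: unmixed_alpha].
have /RhatE [_ [supp|supp]] := root_sigma rsRhat i Ralpha; rewrite sigma_alpha in supp.
  by have := supp j jJ; rewrite !zvecE eqxx (negPf ij) /=; lia.
by have := supp i; rewrite inE negbK !zvecE eqxx (eq_sym j) (negPf ij) /=; move/(_ iJ); lia.
Qed.

End Restriction.

Section Words.
Variables (I : finType) (A : Type) (rho : I -> A -> A) (C : A -> I -> I -> int).

Definition rho_word (a : A) (s : seq I) : A := foldr rho a s.

Fixpoint sigma_word (a : A) (s : seq I) (v : zvec I) : zvec I :=
  if s is k :: s' then sigma C k (rho_word a s') (sigma_word a s' v) else v.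

Lemma sigma_wordB a s : {morph sigma_word a s : x y / x - y}.
Proof. by elim: s => //= k s IH x y; rewrite IH raddfB. Qed.

HB.instance Definition _ a s :=
  GRing.isZmodMorphism.Build (zvec I) (zvec I) (sigma_word a s) (sigma_wordB a s).

Lemma sigma_word_out (J : {set I}) a s v m :
  all (mem J) s -> m \notin J -> sigma_word a s v m = v m.
Proof.
move=> sJ mJ; elim: s sJ => //= k s IH /andP [kJ sJ].
by rewrite sigma_neq ?IH //; apply: contraNneq mJ => ->.
Qed.

Lemma sigma_word_alpha_out (J : {set I}) a s l : (forall b, cartan_split C J b) ->
  all (mem J) s -> l \notin J -> sigma_word a s (alpha l) = alpha l.
Proof.
move=> split_J sJ lJ; elim: s sJ => //= k s IH /andP [kJ sJ].
have [Ckl _] := split_J (rho_word a s) k l kJ lJ.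
by rewrite IH // sigma_alpha Ckl mulr0z subr0.
Qed.

Lemma sigma_word_inj a s : is_cartan_scheme rho C -> injective (sigma_word a s).
Proof.
by move=> csC; elim: s => //= k s IH x y /(can_inj (sigma_rhoK csC _ k)) /IH.
Qed.

Variable R : A -> zvec I -> Prop.
Hypothesis rsR : is_root_system rho C R.

Lemma root_sigma_word a s v : R a v -> R (rho_word a s) (sigma_word a s v).
Proof. by move=> Rv; elim: s => //= k s; apply: (root_sigma rsR). Qed.

Lemma root_sigma_word_inv a s u :
  R (rho_word a s) u -> exists2 v, R a v & sigma_word a s v = u.
Proof.
elim: s u => [|k s IH] u /=; first by exists u.
case/(root_sigma_inv rsR) => u' /IH [v Rv <-] <-; by exists v.
Qed.

End Words.

Lemma count_lt_subpred (T : eqType) (a1 a2 : pred T) s x :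
  subpred a1 a2 -> x \in s -> a2 x -> ~~ a1 x -> (count a1 s < count a2 s)%N.
Proof.
move=> a12 + a2x a1x; elim: s => //= y s IH; rewrite in_cons => /orP [/eqP <-|xs].
  by rewrite a2x (negPf a1x) add0n add1n ltnS (sub_count a12).
by rewrite -addnS; apply: leq_add (IH xs); case a1y: (a1 y); rewrite // (a12 _ a1y).
Qed.

Section FiniteRootSystem.
Variables (I : finType) (A : Type) (rho : I -> A -> A) (C : A -> I -> I -> int).
Variable R : A -> zvec I -> Prop.
Hypotheses (csC : is_cartan_scheme rho C) (rsR : is_root_system rho C R).

Lemma sigma_root_nonpos b k y : R b y -> nonpos_vec y -> y != - alpha k ->
  nonpos_vec (sigma C k b y).
Proof.
move=> Ry y_nonpos y_neq.
have [/existsP [t /andP [tk yt]]|] := boolP [exists t, (t != k) && (y t != 0)].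
  case: (root_sign rsR (root_sigma rsR k Ry)) => // sy_nonneg.
  by have := sy_nonneg t; rewrite sigma_neq //; have := y_nonpos t; move: yt; lia.
rewrite negb_exists => /forallP y_on_k.
have yE : y = alpha k *~ y k.
  apply/ffunP => t; rewrite zvecE alphaE.
  case: (eqVneq k t) => [->|kt] /=; first lia.
  by have := y_on_k t; rewrite eq_sym kt /= negbK => /eqP ->; lia.
case: (root_multiple_alpha rsR Ry yE) => y_alpha; last by rewrite y_alpha eqxx in y_neq.
by have := y_nonpos k; rewrite y_alpha alphaE eqxx.
Qed.

Definition inversions (L : seq (zvec I)) (a : A) (s : seq I) : pred (zvec I) :=
  [pred x | [&& x \in L, [forall t, 0 <= x t] & [forall t, sigma_word rho C a s x t <= 0]]].

Lemma count_inversions_lt L a s k b : (forall v, R a v <-> v \in L) ->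
  R a b -> ~ nonpos_vec b -> sigma_word rho C a s b = alpha k ->
  (count (inversions L a s) L < count (inversions L a (k :: s)) L)%N.
Proof.
move=> rootsL Rb b_not_nonpos sb.
have b_nonneg : nonneg_vec b by case: (root_sign rsR Rb).
have [t b_pos] : exists t, 0 < b t.
  have [/existsP //|] := boolP [exists t, 0 < b t].
  rewrite negb_exists => /forallP b_le0; case: b_not_nonpos => t.
  by have := b_le0 t; lia.
have inversions_mono : subpred (inversions L a s) (inversions L a (k :: s)).
  move=> x /and3P [xL /forallP x_nonneg /forallP sx_nonpos].
  apply/and3P; split; [done | exact/forallP |].
  have Rsx := root_sigma_word rsR s ((rootsL x).2 xL).
  apply/forallP => t' /=; apply: (sigma_root_nonpos Rsx).
    by move=> t''; apply: sx_nonpos.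
  apply/eqP => sx_eq; have xE : x = - b.
    by apply: (sigma_word_inj (a := a) (s := s) csC); rewrite raddfN /= sx_eq sb.
  by have := x_nonneg t; rewrite xE zvecE; lia.
apply: (count_lt_subpred (x := b) inversions_mono); first exact/rootsL.
  apply/and3P; split; [exact/rootsL | exact/forallP |].
  apply/forallP => t' /=; rewrite sb sigma_alpha (cartan_diag csC) !zvecE /=.
  by case: (k == t'); lia.
by apply/and3P => -[_ _ /forallP/(_ k)]; rewrite sb alphaE eqxx.
Qed.

(* [s] plays the role of the longest element of the parabolic subgroup of [J]. *)
Definition negative_preimages (J : {set I}) (a : A) (s : seq I) : Prop :=
  forall k b, k \in J -> R a b -> sigma_word rho C a s b = alpha k -> nonpos_vec b.

Lemma negative_preimages_exist (J : {set I}) a :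
  (exists L : seq (zvec I), forall v, R a v <-> v \in L) ->
  exists2 s, all (mem J) s & negative_preimages J a s.
Proof.
move=> [L rootsL].
suff: forall n s, all (mem J) s -> (size L - count (inversions L a s) L < n)%N ->
    exists2 s, all (mem J) s & negative_preimages J a s.
  by move/(_ (size L).+1 [::] isT); apply; rewrite ltnS leq_subr.
elim=> // n IH s sJ measure_s.
have [[k [b [kJ Rb sb b_not_nonpos]]]|none] :=
  classic (exists k b,
    [/\ k \in J, R a b, sigma_word rho C a s b = alpha k & ~ nonpos_vec b]).
  apply: (IH (k :: s)); first by rewrite /= kJ.
  have := count_inversions_lt rootsL Rb b_not_nonpos sb.
  have := count_size (inversions L a (k :: s)) L; lia.
exists s => // k b kJ Rb sb; apply: NNPP => b_not_nonpos.
by apply: none; exists k, b.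
Qed.

Lemma negative_preimages_nonpos (J : {set I}) a s v : (forall b, cartan_split C J b) ->
  all (mem J) s -> negative_preimages J a s ->
  nonneg_vec (sigma_word rho C a s v) -> forall t, t \in J -> v t <= 0.
Proof.
move=> split_J sJ neg_s u_nonneg.
have preimage l : exists2 b : zvec I,
    sigma_word rho C a s b = alpha l & forall t, t \in J -> b t <= 0.
  case: (boolP (l \in J)) => lJ.
    have [b Rb sb] := root_sigma_word_inv rsR (root_alpha rsR (rho_word rho a s) l).
    by exists b => // t _; exact: (neg_s l b lJ Rb sb t).
  exists (alpha l); first exact: sigma_word_alpha_out.
  by move=> t tJ; rewrite alphaE; case: eqP tJ lJ => // ->->.
have [pre pre_alpha pre_J] := fin_all_exists2 preimage.
have vE : v = \sum_l pre l *~ sigma_word rho C a s v l.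
  apply: (sigma_word_inj (a := a) (s := s) csC); rewrite raddf_sum [LHS]zvec_decomp.
  by apply: eq_bigr => l _; rewrite raddfMz /= pre_alpha.
move=> t tJ; rewrite vE sum_ffunE; apply: sumr_le0 => l _.
by rewrite zvecMzE mulr_le0_ge0 // pre_J.
Qed.

Lemma roots_unmixed (J : {set I}) : (forall b, cartan_split C J b) ->
  root_system_finite R -> forall a v, R a v -> unmixed J v.
Proof.
move=> split_J fin.
suff nonneg_case a v : R a v -> nonneg_vec v -> unmixed J v.
  move=> a v Rv; case: (root_sign rsR Rv) => [|v_nonpos]; first exact: nonneg_case Rv.
  rewrite -unmixedN; apply: nonneg_case (rootN rsR Rv) _ => t.
  by rewrite zvecNE oppr_ge0.
move=> Rv v_nonneg.
have [/forallP v_in_J|] := boolP [forall m, (m \in J) || (v m == 0)].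
  by left=> m mJ; have := v_in_J m; rewrite (negPf mJ) => /eqP.
rewrite negb_forall => /existsP [m]; rewrite negb_or => /andP [mJ vm_neq0].
right=> t; rewrite inE negbK => tJ.
have [s sJ neg_s] := negative_preimages_exist J (fin a).
have u_nonneg : nonneg_vec (sigma_word rho C a s v).
  case: (root_sign rsR (root_sigma_word rsR s Rv)) => // u_nonpos.
  by have := u_nonpos m; rewrite (sigma_word_out rho C a v sJ mJ); have := v_nonneg m; lia.
apply/eqP; rewrite eq_le v_nonneg andbT.
exact: (negative_preimages_nonpos split_J sJ neg_s u_nonneg).
Qed.

End FiniteRootSystem.

Theorem proposition4p6 (I : finType) (A : Type)
    (rho : I -> A -> A) (C : A -> I -> I -> int) (R : A -> zvec I -> Prop)
    (I' : {set I}) :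
  is_cartan_scheme rho C -> cs_connected rho ->
  is_root_system rho C R ->
  I' != set0 -> ~: I' != set0 ->
  let c1 := exists a : A, forall i j, i \in I' -> j \in ~: I' -> C a i j = 0 in
  let c2 := forall a i j, i \in I' -> j \in ~: I' -> C a i j = 0 /\ C a j i = 0 in
  let c3 := is_root_system rho C (Rhat R I') in
  let c4 := forall a v, Rhat R I' a v <-> R a v in
  let c5 := forall a v, R a v <->
              ((R a v /\ supported_in I' v) \/ (R a v /\ supported_in (~: I') v)) in
  (c1 <-> c2) /\ (c2 <-> c3) /\
  (root_system_finite R -> (c3 <-> c4) /\ (c3 <-> c5)).
Proof.
move=> csC conn rsR _ _ c1 c2 c3 c4 c5.
have c2E : c2 <-> forall a, cartan_split C I' a.
  by rewrite /c2; split=> c2_ a i j iI; rewrite ?inE => jI; apply: c2_; rewrite ?inE.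
have c12 : c1 <-> c2.
  split=> [[a0 Ca0]|c2_]; last first.
    by have [[a0] _] := csC; exists a0 => i j iI jI; have [] := c2_ a0 i j iI jI.
  apply/c2E/(cartan_split_everywhere csC rsR conn) => i j iI jI.
  have Cij : C a0 i j = 0 by apply: Ca0; rewrite ?inE.
  by split; last exact: (cartan_zero_sym csC Cij).
have c23 : c2 <-> c3.
  rewrite c2E; split=> [|rsRhat a]; first exact: Rhat_root_system.
  exact: (Rhat_root_system_cartan_split csC rsR).
have c34 : root_system_finite R -> c3 <-> c4.
  move=> fin; rewrite /c3; split=> [/c23/c2E split_I' a v|c4_].
    split=> [/RhatE [] //|Rv]; apply/RhatE; split=> //.
    exact: (roots_unmixed csC rsR split_I' fin Rv).
  suff -> : Rhat R I' = R by [].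
  by apply: functional_extensionality => a; apply: functional_extensionality => v;
     apply: propositional_extensionality.
have c45 : c4 <-> c5 by split=> c_ a v; apply: iff_sym (c_ a v).
by do 2!split=> //; move=> fin; rewrite c34 // c45.
Qed.
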